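(* Let $P:\mathbb{Z}\to\mathbb{RP}^2$ be a $3$-nice sequence with every three consecutive points non-collinear, let $i\in\mathbb{Z}$, and let $x_{2i},x_{2i+1}$ be the corner invariants at index $i$. Suppose $P_{i-2},P_{i-1},P_i,P_{i+1}\in\mathbb{A}^2$, the triples $(P_{i-2},P_{i-1},P_i)$ and $(P_{i-1},P_i,P_{i+1})$ are positive, the quadrilateral with vertices $P_{i-2},P_{i-1},P_i,P_{i+1}$ (in this order) is convex, and $(x_{2i},x_{2i+1})\in(1,\infty)\times(0,1)$. Then $P_{i+2}\in\operatorname{int}(P_{i-2},P_{i-1},P_{i+1})$; moreover the quadrilateral with vertices $P_{i-1},P_i,P_{i+1},P_{i+2}$ is convex and the triples $(P_i,P_{i+1},P_{i+2})$ and $(P_{i-1},P_i,P_{i+2})$ are positive.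
   Context: The affine patch $\mathbb{A}^2=\{[x:y:1]\}\subset\mathbb{RP}^2$ is identified with $\mathbb{R}^2$. For $V_1,V_2,V_3\in\mathbb{A}^2$ with affine coordinates $\tilde V_j=(x_j,y_j,1)$, $\mathcal{O}(V_1,V_2,V_3)=\det(\tilde V_1,\tilde V_2,\tilde V_3)$; the triple is positive if $\mathcal{O}>0$. $\operatorname{int}(V_1,V_2,V_3)$ is the interior of the affine triangle. $P$ is $3$-nice if $P_j,P_{j+1},P_{j+3},P_{j+4}$ are in general position for every $j$. Inverse cross ratio: for four collinear points $A,B,C,D$, map their line projectively to the $x$-axis with coordinates $a,b,c,d$ and set $\chi(A,B,C,D)=\frac{(a-b)(c-d)}{(a-c)(b-d)}$ (value in $\mathbb{R}\cup\{\infty\}$, projectively invariant). Corner invariants: $x_{2i}=\chi(P_{i-2},P_{i-1},P_{i-2}P_{i-1}\cap P_iP_{i+1},P_{i-2}P_{i-1}\cap P_{i+1}P_{i+2})$ and $x_{2i+1}=\chi(P_{i+2},P_{i+1},P_{i+2}P_{i+1}\cap P_iP_{i-1},P_{i+2}P_{i+1}\cap P_{i-1}P_{i-2})$. *)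

(* Points of RP^2 are represented by nonzero homogeneous
   coordinate vectors in R^3 (R a real field); every notion below is
   invariant under rescaling of representatives. *)
From HB Require Import structures.
From mathcomp Require Import all_boot all_order all_algebra.
Set Implicit Arguments. Unset Strict Implicit. Unset Printing Implicit Defensive.
Import Order.TTheory GRing.Theory Num.Theory.
Local Open Scope ring_scope.

Section Proj.
Variable R : realFieldType.

Definition vec3 := (R * R * R)%type.
Definition vx (v : vec3) : R := v.1.1.
Definition vy (v : vec3) : R := v.1.2.
Definition vz (v : vec3) : R := v.2.
Definition mkv (x y z : R) : vec3 := (x, y, z).
Definition vzero : vec3 := mkv 0 0 0.

Definition cross (u v : vec3) : vec3 :=
  mkv (vy u * vz v - vz u * vy v)
      (vz u * vx v - vx u * vz v)
      (vx u * vy v - vy u * vx v).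
Definition dot (u v : vec3) : R := vx u * vx v + vy u * vy v + vz u * vz v.
Definition det3 (u v w : vec3) : R := dot (cross u v) w.

Definition collinear (u v w : vec3) : Prop := det3 u v w = 0.

Definition gen_pos4 (a b c d : vec3) : Prop :=
  [/\ ~ collinear a b c, ~ collinear a b d, ~ collinear a c d & ~ collinear b c d].

Definition join (u v : vec3) : vec3 := cross u v.
Definition meet (l m : vec3) : vec3 := cross l m.

(* Inverse cross ratio chi(A,B,C,D) of four collinear points, A <> B.
   Writing n for the line AB, each u x v (u, v on the line) equals
   [u,v] * n / |n|^2-scaled, where [u,v] is the 2x2 determinant of
   coordinates of u, v on the line; for points [a:1],...,[d:1] of the
   x-axis [u,v] = a - b, so this is (a-b)(c-d)/((a-c)(b-d)).
   (Value infinity, i.e. zero denominator, gives 0 by MathComp's x/0 = 0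
   convention; it never satisfies the interval hypotheses used below.) *)
Definition br (n u v : vec3) : R := dot (cross u v) n.
Definition chi (A B C D : vec3) : R :=
  let n := join A B in
  (br n A B * br n C D) / (br n A C * br n B D).

Definition in_affine (u : vec3) : Prop := vz u != 0.
Definition aff (u : vec3) : vec3 := mkv (vx u / vz u) (vy u / vz u) 1.

Definition orient (u v w : vec3) : R := det3 (aff u) (aff v) (aff w).
Definition positive_triple (u v w : vec3) : Prop :=
  [/\ in_affine u, in_affine v, in_affine w & 0 < orient u v w].

Definition in_int_triangle (p v1 v2 v3 : vec3) : Prop :=
  [/\ in_affine p, in_affine v1, in_affine v2, in_affine v3 &
   exists a b c : R, [/\ 0 < a, 0 < b, 0 < c, a + b + c = 1 &
     vx (aff p) = a * vx (aff v1) + b * vx (aff v2) + c * vx (aff v3) /\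
     vy (aff p) = a * vy (aff v1) + b * vy (aff v2) + c * vy (aff v3)]].

Definition convex_quad (a b c d : vec3) : Prop :=
  [/\ in_affine a, in_affine b, in_affine c, in_affine d &
   (0 < orient a b c /\ 0 < orient b c d /\ 0 < orient c d a /\ 0 < orient d a b) \/
   (orient a b c < 0 /\ orient b c d < 0 /\ orient c d a < 0 /\ orient d a b < 0)].

Definition proj_seq (P : int -> vec3) : Prop := forall j, P j != vzero.

Definition three_nice (P : int -> vec3) : Prop :=
  forall j : int, gen_pos4 (P j) (P (j + 1)) (P (j + 3)) (P (j + 4)).

Definition consec_noncollinear (P : int -> vec3) : Prop :=
  forall j : int, ~ collinear (P j) (P (j + 1)) (P (j + 2)).

Definition corner_even (P : int -> vec3) (i : int) : R :=
  chi (P (i - 2)) (P (i - 1))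
      (meet (join (P (i - 2)) (P (i - 1))) (join (P i) (P (i + 1))))
      (meet (join (P (i - 2)) (P (i - 1))) (join (P (i + 1)) (P (i + 2)))).

Definition corner_odd (P : int -> vec3) (i : int) : R :=
  chi (P (i + 2)) (P (i + 1))
      (meet (join (P (i + 2)) (P (i + 1))) (join (P i) (P (i - 1))))
      (meet (join (P (i + 2)) (P (i + 1))) (join (P (i - 1)) (P (i - 2)))).

End Proj.

From HB Require Import structures.
From mathcomp Require Import all_boot all_order all_algebra.
From mathcomp Require Import ring lra.
Set Implicit Arguments.
Unset Strict Implicit.
Unset Printing Implicit Defensive.
Import Order.TTheory GRing.Theory Num.Theory.
Local Open Scope ring_scope.

(* Write [u v w] for det3 u v w.  By Cramer's rule E has homogeneous
   barycentric coordinates p : q : r = [E B D] : [A E D] : [A B E] with respect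
   to the triangle A B D.  Grassmann-Plucker relations turn the two corner
   invariants into
     x_{2i} = 1 + [B C D] q / ([C D A] p),
     x_{2i+1} = [A B C] p / ([A B C] p + [B C D] r).
   Convexity of A B C D makes [A B C], [B C D], [C D A] positive, so
   x_{2i} > 1 and 0 < x_{2i+1} < 1 say exactly that q and r have the sign of p,
   i.e. E lies inside the triangle A B D.  The orientations of the new triples
   are then positive combinations of the old ones. *)

Section CornerInvariants.
Variable R : realFieldType.
Implicit Types (A B C D E a b d e u v w : vec3 R) (k l m : R).

Local Ltac coord_ring := rewrite /det3 /cross /dot /vx /vy /vz /mkv /=; ring.

Definition scale k u : vec3 R := mkv (k * vx u) (k * vy u) (k * vz u).

Definition lin k u l v : vec3 R :=
  mkv (k * vx u + l * vx v) (k * vy u + l * vy v) (k * vz u + l * vz v).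

Definition corner_chi A B C D E : R :=
  chi A B (meet (join A B) (join C D)) (meet (join A B) (join D E)).

Lemma divMMl k x y : k != 0 -> (k * x) / (k * y) = x / y.
Proof. by move=> nk; rewrite -mulf_div divff ?mul1r. Qed.

Lemma aff_scale u : in_affine u -> scale (vz u) (aff u) = u.
Proof.
case: u => [[x y] z]; rewrite /in_affine /scale /aff /vx /vy /vz /mkv /= => hz.
by congr (_, _, _); rewrite ?mulr1 // mulrC divfK.
Qed.

Lemma scale1 u : scale 1 u = u.
Proof. by case: u => [[x y] z]; rewrite /scale /vx /vy /vz /mkv /= !mul1r. Qed.

Lemma det3_scale k l m u v w :
  det3 (scale k u) (scale l v) (scale m w) = k * l * m * det3 u v w.
Proof. coord_ring. Qed.

Lemma det3_cycle u v w : det3 u v w = det3 v w u.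
Proof. coord_ring. Qed.

Lemma dot_self_eq0 u : dot u u = 0 -> u = vzero R.
Proof.
case: u => [[x y] z]; rewrite /dot /vx /vy /vz /= => h.
by have [-> -> ->] : [/\ x = 0, y = 0 & z = 0] by split; nra.
Qed.

Lemma meet_join A B C D :
  meet (join A B) (join C D) = lin (- det3 B C D) A (det3 A C D) B.
Proof.
case: A => [[? ?] ?]; case: B => [[? ?] ?]; case: C => [[? ?] ?]; case: D => [[? ?] ?].
rewrite /meet /join /lin /det3 /cross /dot /vx /vy /vz /mkv /=.
by congr (_, _, _); ring.
Qed.

Lemma chi_lin A B k1 k2 l1 l2 :
  dot (cross A B) (cross A B) != 0 ->
  chi A B (lin k1 A k2 B) (lin l1 A l2 B) = (k1 * l2 - k2 * l1) / (k2 * - l1).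
Proof.
move=> nAB; rewrite /chi /join.
have -> : br (cross A B) A B = dot (cross A B) (cross A B) by [].
have -> : br (cross A B) (lin k1 A k2 B) (lin l1 A l2 B) =
          (k1 * l2 - k2 * l1) * dot (cross A B) (cross A B) by rewrite /br; coord_ring.
have -> : br (cross A B) A (lin k1 A k2 B) = k2 * dot (cross A B) (cross A B).
  by rewrite /br; coord_ring.
have -> : br (cross A B) B (lin l1 A l2 B) = - l1 * dot (cross A B) (cross A B).
  by rewrite /br; coord_ring.
set nn := dot _ _.
have -> : nn * ((k1 * l2 - k2 * l1) * nn) = nn * nn * (k1 * l2 - k2 * l1) by ring.
have -> : k2 * nn * (- l1 * nn) = nn * nn * (k2 * - l1) by ring.
by rewrite divMMl // mulf_neq0.
Qed.

(* The Grassmann-Plucker relation [A C D][B D E] - [B C D][A D E] = [A B D][C D E]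
   gives the numerator; in this form the identity also holds when A and B are
   dependent, where both sides are 0. *)
Lemma corner_chiE A B C D E :
  corner_chi A B C D E = det3 A B D * det3 C D E / (det3 A C D * det3 B D E).
Proof.
have [/dot_self_eq0 nAB0|nAB] := eqVneq (dot (cross A B) (cross A B)) 0.
  have -> : det3 A B D = 0 by rewrite /det3 nAB0 /dot /vx /vy /vz /= !mul0r !addr0.
  by rewrite /corner_chi /chi /join /br nAB0 /dot /vx /vy /vz /= !mulr0 !addr0 !mul0r.
rewrite /corner_chi !meet_join chi_lin //.
congr (_ / _); coord_ring.
Qed.

Lemma corner_chi_scale k1 k2 k3 k4 k5 A B C D E :
  k1 != 0 -> k2 != 0 -> k3 != 0 -> k4 != 0 -> k5 != 0 ->
  corner_chi (scale k1 A) (scale k2 B) (scale k3 C) (scale k4 D) (scale k5 E) =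
  corner_chi A B C D E.
Proof.
move=> *; rewrite !corner_chiE !det3_scale.
set K := k1 * k2 * k3 * k4 * k4 * k5.
have nK : K != 0 by rewrite !mulf_neq0.
rewrite -[RHS](divMMl _ _ nK); congr (_ / _); rewrite /K; ring.
Qed.

Lemma corner_chi_aff A B C D E :
  in_affine A -> in_affine B -> in_affine C -> in_affine D ->
  corner_chi A B C D E = corner_chi (aff A) (aff B) (aff C) (aff D) E /\
  corner_chi E D C B A = corner_chi E (aff D) (aff C) (aff B) (aff A).
Proof.
move=> hA hB hC hD.
by split; rewrite -{1}(aff_scale hA) -{1}(aff_scale hB) -{1}(aff_scale hC)
  -{1}(aff_scale hD) -{1}(scale1 E) corner_chi_scale ?oner_neq0.
Qed.

Lemma gt1_div_sign (x y : R) : 1 < x / y -> 0 < y * (x - y).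
Proof.
case: (ltgtP y 0) => hy.
- by rewrite ltr_ndivlMr // mul1r => hxy; nra.
- by rewrite ltr_pdivlMr // mul1r => hxy; nra.
- by rewrite hy invr0 mulr0 ltr10.
Qed.

Lemma in01_div_sign (x y : R) : 0 < x / y < 1 -> 0 < x * (y - x).
Proof.
case: (ltgtP y 0) => hy /andP[].
- by rewrite ltr_ndivlMr // ltr_ndivrMr // mul0r mul1r => *; nra.
- by rewrite ltr_pdivlMr // ltr_pdivrMr // mul0r mul1r => *; nra.
- by rewrite hy invr0 mulr0 ltxx.
Qed.

Lemma corner_chi_gt1 A B C D E :
  1 < corner_chi A B C D E ->
  0 < (det3 C D A * det3 E B D) * (det3 B C D * det3 A E D).
Proof.
rewrite corner_chiE => /gt1_div_sign.
by congr (0 < _); coord_ring.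
Qed.

Lemma corner_chi_in01 A B C D E :
  0 < corner_chi E D C B A < 1 ->
  0 < (det3 A B C * det3 E B D) * (det3 B C D * det3 A B E).
Proof.
rewrite corner_chiE => /in01_div_sign.
by congr (0 < _); coord_ring.
Qed.

Lemma same_sign_div_sum (p q r : R) : 0 < p * q -> 0 < p * r ->
  [/\ 0 < p / (p + q + r), 0 < q / (p + q + r) & 0 < r / (p + q + r)].
Proof.
wlog p_gt0 : p q r / 0 < p => [wlog_pos pq pr|].
  have [p_lt0||p0] := ltgtP p 0; last by move: pq; rewrite p0 mul0r ltxx.
  - have := wlog_pos (- p) (- q) (- r).
    by rewrite -!opprD invrN !mulrNN oppr_gt0; apply.
  - by move=> p_gt0; apply: wlog_pos.
move=> pq pr; have q_gt0 : 0 < q by rewrite -(pmulr_rgt0 _ p_gt0).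
have r_gt0 : 0 < r by rewrite -(pmulr_rgt0 _ p_gt0).
by split; rewrite divr_gt0 // !addr_gt0.
Qed.

Lemma cramer_coords a b d e :
  [/\ det3 a b d * vx e = det3 e b d * vx a + det3 a e d * vx b + det3 a b e * vx d,
      det3 a b d * vy e = det3 e b d * vy a + det3 a e d * vy b + det3 a b e * vy d &
      det3 a b d * vz e = det3 e b d * vz a + det3 a e d * vz b + det3 a b e * vz d].
Proof. by split; coord_ring. Qed.

Lemma barycentric_aff a b d e : vz a = 1 -> vz b = 1 -> vz d = 1 ->
  0 < det3 e b d * det3 a e d -> 0 < det3 e b d * det3 a b e ->
  in_affine e /\ exists al be ga : R, [/\ 0 < al, 0 < be, 0 < ga, al + be + ga = 1 &
    vx (aff e) = al * vx a + be * vx b + ga * vx d /\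
    vy (aff e) = al * vy a + be * vy b + ga * vy d].
Proof.
move=> za zb zd pq pr; have [cx cy cz] := cramer_coords a b d e.
rewrite za zb zd !mulr1 in cz.
move: (det3 e b d) (det3 a e d) (det3 a b e) pq pr cx cy cz => p q r pq pr cx cy cz.
have [al_gt0 be_gt0 ga_gt0] := same_sign_div_sum pq pr.
set t := p + q + r in al_gt0 be_gt0 ga_gt0 cz.
have nt : t != 0 by apply: contraTneq al_gt0 => ->; rewrite invr0 mulr0 ltxx.
have /andP[nD ne] : (det3 a b d != 0) && (vz e != 0) by rewrite -negb_or -mulf_eq0 cz.
split=> //; exists (p / t), (q / t), (r / t); split=> //; first by rewrite -!mulrDl divff.
have -> : vx (aff e) = vx e / vz e by [].
have -> : vy (aff e) = vy e / vz e by [].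
by split; rewrite -(divMMl _ _ nD) ?cx ?cy cz !mulrDl !(mulrAC _ _ t^-1).
Qed.

Lemma det3_barycentric u v a b d w al be ga :
  vz a = 1 -> vz b = 1 -> vz d = 1 -> vz w = 1 -> al + be + ga = 1 ->
  vx w = al * vx a + be * vx b + ga * vx d ->
  vy w = al * vy a + be * vy b + ga * vy d ->
  det3 u v w = al * det3 u v a + be * det3 u v b + ga * det3 u v d.
Proof.
move=> za zb zd zw hs hx hy; rewrite /det3 /cross /dot /= hx hy zw za zb zd.
have -> : ga = 1 - al - be by lra.
rewrite /vx /vy /vz /=; ring.
Qed.

Lemma convex_corner_step A B C D E :
  in_affine A -> in_affine B -> in_affine C -> in_affine D ->
  0 < orient A B C -> convex_quad A B C D ->
  1 < corner_chi A B C D E -> 0 < corner_chi E D C B A < 1 ->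
  [/\ in_int_triangle E A B D, convex_quad B C D E, positive_triple C D E &
      positive_triple B C E].
Proof.
move=> hA hB hC hD oABC [_ _ _ _ cq].
have [oBCD oCDA oDAB] : [/\ 0 < orient B C D, 0 < orient C D A & 0 < orient D A B].
  by case: cq => [[_ [? [? ?]]] | [? _]]; [split | lra].
have [-> ->] := corner_chi_aff E hA hB hC hD.
move: oABC oBCD oCDA oDAB; rewrite /orient.
set a := aff A; set b := aff B; set c := aff C; set d := aff D.
move=> k1_gt0 k2_gt0 k3_gt0 k0_gt0 /corner_chi_gt1 pq /corner_chi_in01 pr.
rewrite mulrACA (pmulr_rgt0 _ (mulr_gt0 k3_gt0 k2_gt0)) in pq.
rewrite mulrACA (pmulr_rgt0 _ (mulr_gt0 k1_gt0 k2_gt0)) in pr.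
have [hE [al [be [ga [al_gt0 be_gt0 ga_gt0 hs [ex ey]]]]]] :=
  barycentric_aff (a := a) (b := b) (d := d) erefl erefl erefl pq pr.
have det3E u v : det3 u v (aff E) = al * det3 u v a + be * det3 u v b + ga * det3 u v d.
  exact: det3_barycentric hs ex ey.
have oCDE : 0 < det3 c d (aff E).
  have -> : det3 c d (aff E) = al * det3 c d a + be * det3 b c d by rewrite det3E; coord_ring.
  by rewrite addr_gt0 ?mulr_gt0.
have oDEB : 0 < det3 d (aff E) b.
  have -> : det3 d (aff E) b = al * det3 d a b.
    by rewrite (det3_cycle d) (det3_cycle (aff E)) det3E; coord_ring.
  by rewrite mulr_gt0.
have oBCE : 0 < det3 b c (aff E).
  have -> : det3 b c (aff E) = al * det3 a b c + ga * det3 b c d by rewrite det3E; coord_ring.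
  by rewrite addr_gt0 ?mulr_gt0.
split; do ?split=> //; first by exists al, be, ga.
by left; rewrite /orient (det3_cycle (aff E)).
Qed.

End CornerInvariants.

(* Only the five points P_(i-2), ..., P_(i+2) enter, and the bounds on the
   corner invariants already force every determinant divided by to be nonzero. *)
Theorem mainTheorem14 (R : realFieldType) (P : int -> vec3 R) (i : int) :
  proj_seq P -> three_nice P -> consec_noncollinear P ->
  in_affine (P (i - 2)) -> in_affine (P (i - 1)) ->
  in_affine (P i) -> in_affine (P (i + 1)) ->
  positive_triple (P (i - 2)) (P (i - 1)) (P i) ->
  positive_triple (P (i - 1)) (P i) (P (i + 1)) ->
  convex_quad (P (i - 2)) (P (i - 1)) (P i) (P (i + 1)) ->
  1 < corner_even P i -> 0 < corner_odd P i < 1 ->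
  [/\ in_int_triangle (P (i + 2)) (P (i - 2)) (P (i - 1)) (P (i + 1)),
      convex_quad (P (i - 1)) (P i) (P (i + 1)) (P (i + 2)),
      positive_triple (P i) (P (i + 1)) (P (i + 2)) &
      positive_triple (P (i - 1)) (P i) (P (i + 2))].
Proof.
move=> _ _ _ hA hB hC hD [_ _ _ oABC] _ convex_ABCD x_even x_odd.
exact: convex_corner_step hA hB hC hD oABC convex_ABCD x_even x_odd.
Qed.
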